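(* For all integers $t\ge 4$ and $r\ge 3$, $C_r(n,M_t)=\Omega\!\left(n^{\frac{1}{2r+1}}\right)$ as $n\to\infty$, where $M_t$ is the $r$-graph consisting of $t$ pairwise disjoint edges.
   Context: An $r$-graph is an $r$-uniform hypergraph; $K_n^{(r)}$ is the complete $r$-graph on $n$ vertices. A copy of an $r$-graph $H$ in $K_n^{(r)}$ is a subhypergraph isomorphic to $H$. An $(n,r,H)$-local coloring with $k$ colors is a family of edge-colorings $f_v:E(K_n^{(r)})\to[k]$, one per vertex $v$, such that for every copy $T$ of $H$ there is $u\in V(T)$ with $f_u$ injective on $E(T)$. $C_r(n,H)$ is the minimum such $k$. *)

From mathcomp Require Import all_boot.


Definition Kedges (n r : nat) : {set {set 'I_n}} := [set e : {set 'I_n} | #|e| == r].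

Definition copy_Mt (n r t : nat) (T : {set {set 'I_n}}) : bool :=
  [&& T \subset Kedges n r, #|T| == t &
      [forall e1 in T, forall e2 in T, (e1 != e2) ==> [disjoint e1 & e2]]].

Definition hverts (n : nat) (T : {set {set 'I_n}}) : {set 'I_n} :=
  \bigcup_(e in T) e.

(* An (n,r,M_t)-local coloring with k colors: for each vertex v an edge
   coloring f v (values on non-edges are irrelevant). *)
Definition local_coloring (n r t k : nat)
    (f : 'I_n -> {set 'I_n} -> 'I_k) : Prop :=
  forall T, copy_Mt n r t T ->
    exists2 u, u \in hverts n T & {in T &, injective (f u)}.

Definition has_local_coloring (n r t k : nat) : Prop :=
  exists f : 'I_n -> {set 'I_n} -> 'I_k, local_coloring n r t k f.

(* Suppose f is a local colouring of K_n^(r) with k colours and n >= 4r(t+2)k^(2r+1).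
   Fix a matching M0 of 2k edges. A vertex u outside M0 colours the 2k edges of M0 with k
   colours, so it sees at least k ordered pairs of distinct edges of equal colour; averaging
   over the at most 4k^2 pairs, some pair (A, B) is coloured alike by the f_u of a set V of
   more than r(k^(2r) + t) vertices outside M0. A matching inside V has k^(2r) + t edges,
   and there are only k^(2r) colour patterns on the 2r vertices of A and B, so two of its
   edges e1, e2 are coloured alike by every f_u with u in A or B. Completing A, B, e1, e2
   to t edges of that matching gives a copy of M_t on which no f_u is injective: a vertex
   of A or B confuses e1 with e2, any other vertex lies in V and confuses A with B. *)

From Stdlib Require Import Reals.
From mathcomp Require Import all_boot zify.
Set Implicit Arguments. Unset Strict Implicit. Unset Printing Implicit Defensive.

Section Matchings.
Variable T : finType.
Implicit Types (X Y e : {set T}) (M : {set {set T}}) (r : nat).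

Lemma exists_subset_card X m : m <= #|X| -> exists2 Y : {set T}, Y \subset X & #|Y| = m.
Proof.
case/card_geqP=> s [s_uniq <- sX]; exists [set x in s].
  by apply/subsetP=> x; rewrite inE; apply: sX.
by rewrite cardsE (card_uniqP s_uniq).
Qed.

Lemma exists_subset_card_between Y X m : Y \subset X -> #|Y| <= m <= #|X| ->
  exists Z : {set T}, [/\ Y \subset Z, Z \subset X & #|Z| = m].
Proof.
move=> sYX /andP[Ym mX].
have [W] : exists2 W : {set T}, W \subset X :\: Y & #|W| = m - #|Y|.
  by apply: exists_subset_card; rewrite cardsD (setIidPr sYX); lia.
rewrite subsetD disjoint_sym => /andP[sWX dYW] cW.
exists (Y :|: W); rewrite subsetUl subUset sYX sWX cardsU (disjoint_setI0 dYW) cards0.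
by split=> //; lia.
Qed.

Lemma cover_setU1 e M : cover (e |: M) = e :|: cover M.
Proof. by rewrite /cover bigcup_setU big_set1. Qed.

Lemma cover_subset M1 M2 : M1 \subset M2 -> cover M1 \subset cover M2.
Proof. by move/subsetP=> sM; apply/bigcupsP=> e /sM; apply: bigcup_sup. Qed.

Definition matching r M := {in M, forall e : {set T}, #|e| = r} /\ trivIset M.

Lemma card_cover_matching r M : matching r M -> #|cover M| = #|M| * r.
Proof. by case=> Mr /eqP <-; rewrite (eq_bigr (fun=> r)) // sum_nat_const. Qed.

Lemma matchingS r M1 M2 : M1 \subset M2 -> matching r M2 -> matching r M1.
Proof.
by move=> sM [M2r tiM2]; split; [move=> e /(subsetP sM)/M2r | exact: trivIsetS tiM2].
Qed.

Lemma matchingU1 r e M : 0 < r -> matching r M -> #|e| = r ->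
  [disjoint e & cover M] -> matching r (e |: M) /\ e \notin M.
Proof.
move=> r_gt0 [Mr tiM] er deM.
have M0 : set0 \notin M by apply/negP=> /Mr; rewrite cards0; lia.
have [tiU eM] := trivIsetU1 (fun B BM => disjointWr (bigcup_sup B BM) deM) tiM M0.
by split=> //; split=> // B /setU1P[-> | /Mr].
Qed.

Lemma exists_matching r X a : 0 < r -> a * r <= #|X| ->
  exists M, [/\ matching r M, #|M| = a & cover M \subset X].
Proof.
move=> r_gt0; elim: a => [|a IHa] aX.
  exists set0; rewrite cards0 /cover big_set0 sub0set; split=> //.
  by split=> [e|]; rewrite ?inE // /trivIset /cover !big_set0 cards0.
have /IHa [M [Mr cM sMX]] : a * r <= #|X|.
  by apply: leq_trans aX; rewrite leq_mul2r leqnSn orbT.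
have [e] : exists2 e : {set T}, e \subset X :\: cover M & #|e| = r.
  by apply: exists_subset_card; rewrite cardsD (setIidPr sMX) (card_cover_matching Mr) cM; lia.
rewrite subsetD => /andP[eX deM] er.
have [Mer eM] := matchingU1 r_gt0 Mr er deM.
by exists (e |: M); rewrite cardsU1 eM cM cover_setU1 subUset eX sMX.
Qed.

End Matchings.

Lemma card_monochromatic_pairs (U C : finType) (X : {set U}) (c : U -> C) :
  #|X| - #|C| <= #|[set p in setX X X | (p.1 != p.2) && (c p.1 == c p.2)]|.
Proof.
set P := [set p in _ | _].
pose Q := [set x in X | [exists y in X, (y != x) && (c y == c x)]].
have sQX : Q \subset X by apply/subsetP=> x; rewrite inE => /andP[].
have sQP : Q \subset [set p.2 | p in P].
  apply/subsetP=> x; rewrite inE => /andP[xX /exists_inP[y yX yx]].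
  by apply/imsetP; exists (y, x); rewrite // !inE /= yX xX.
have c_inj : {in X :\: Q &, injective c}.
  move=> x y; rewrite !inE => /andP[xQ xX] /andP[yQ yX] cxy; apply/eqP.
  apply: contraR xQ => xy; rewrite xX /=; apply/exists_inP; exists y => //.
  by rewrite eq_sym xy cxy eqxx.
have := max_card (c @: (X :\: Q)); rewrite card_in_imset // cardsD (setIidPr sQX).
have := leq_trans (subset_leq_card sQP) (leq_imset_card _ _); lia.
Qed.

Lemma card_set_in_sum (U : finType) (A : {set U}) (b : pred U) :
  #|[set x in A | b x]| = \sum_(x in A) b x.
Proof.
rewrite -sum1_card (eq_bigl (fun x => (x \in A) && b x)) => [|x]; last by rewrite inE.
by rewrite big_mkcondr; apply: eq_bigr => x _; case: (b x).
Qed.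

Lemma exists_popular_element (U P : finType) (O : {set U}) (S : U -> {set P})
    (Pi : {set P}) s L :
  (forall u, u \in O -> s <= #|S u|) -> (forall u, u \in O -> S u \subset Pi) ->
  #|Pi| * L < #|O| * s -> exists p, L < #|[set u in O | p \in S u]|.
Proof.
move=> Ss SPi lt_PiO; apply/existsP; apply: contraLR lt_PiO => /existsPn rare.
rewrite -leqNgt.
have double_count :
    \sum_(u in O) #|S u| = \sum_(p in Pi) #|[set u in O | p \in S u]|.
  rewrite (eq_bigr (fun u => \sum_(p in Pi) (p \in S u))) => [|u uO].
    by rewrite exchange_big; apply: eq_bigr => p _; rewrite card_set_in_sum.
  rewrite -card_set_in_sum; apply: eq_card => p.
  by rewrite inE andb_idl // => /(subsetP (SPi u uO)).
apply: leq_trans (_ : \sum_(u in O) #|S u| <= _).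
  by rewrite -sum_nat_const; apply: leq_sum.
rewrite double_count -sum_nat_const; apply: leq_sum => p _.
by rewrite leqNgt rare.
Qed.

Lemma exists_agreeing_pair (I U C : finType) (X : {set I}) (D : {set U})
    (g : I -> U -> C) :
  #|C| ^ #|D| < #|X| -> exists x y, [/\ x \in X, y \in X, x != y & {in D, g x =1 g y}].
Proof.
move=> lt_X.
pose h x : {ffun {u | u \in D} -> C} := [ffun u => g x (val u)].
have /dinjectivePn [x xX [y /andP[yx yX] hxy]] : ~~ dinjectiveb h X.
  apply: contraL lt_X => /dinjectiveP/card_in_imset <-; rewrite -leqNgt.
  by apply: leq_trans (max_card _) _; rewrite card_ffun card_sig.
exists x, y; split; rewrite // 1?eq_sym // => u uD.
by move/ffunP: hxy => /(_ (exist _ u uD)); rewrite !ffunE.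
Qed.

Lemma matching_copy_Mt n r t (M : {set {set 'I_n}}) :
  matching r M -> #|M| = t -> copy_Mt n r t M.
Proof.
move=> [Mr /trivIsetP tiM] cM; apply/and3P; split; first 2 last.
- by apply/forall_inP=> e1 e1M; apply/forall_inP=> e2 e2M; apply/implyP; apply: tiM.
- by apply/subsetP=> e /Mr er; rewrite inE er.
- by rewrite cM.
Qed.

Section LocalColoring.
Variables (n r t k : nat) (f : 'I_n -> {set 'I_n} -> 'I_k).
Hypotheses (r_gt0 : 0 < r) (t_ge4 : 4 <= t) (f_local : local_coloring n r t k f).

Lemma card_collision_set_lt (A B V : {set 'I_n}) :
  #|A| = r -> #|B| = r -> [disjoint A & B] -> [disjoint A :|: B & V] ->
  {in V, forall u, f u A = f u B} -> #|V| < (k ^ (2 * r) + t) * r.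
Proof.
move=> Ar Br dAB dABV collide; rewrite ltnNge; apply/negP.
move=> /(exists_matching r_gt0) [M1 [M1r cM1 sM1V]].
have [e1 [e2 [e1M1 e2M1 e12 agree]]] : exists e1 e2,
    [/\ e1 \in M1, e2 \in M1, e1 != e2 & {in A :|: B, f^~ e1 =1 f^~ e2}].
  apply: (exists_agreeing_pair (fun e u => f u e)).
  rewrite cardsU (disjoint_setI0 dAB) cards0 Ar Br subn0 card_ord cM1 addnn -mul2n; lia.
have [M2 [sE12M2 sM2M1 cM2]] : exists M2 : {set {set 'I_n}},
    [/\ [set e1; e2] \subset M2, M2 \subset M1 & #|M2| = t - 2].
  apply: exists_subset_card_between; rewrite ?subUset ?sub1set ?e1M1 ?e2M1 //.
  by rewrite cards2 e12 cM1; lia.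
have sM2V : cover M2 \subset V := subset_trans (cover_subset sM2M1) sM1V.
have dABM2 := disjointWr sM2V dABV.
have dAM2 := disjointWl (subsetUl A B) dABM2.
have dBM2 := disjointWl (subsetUr A B) dABM2.
have [M2Br BM2] := matchingU1 r_gt0 (matchingS sM2M1 M1r) Br dBM2.
have [Mr AM] : matching r (A |: (B |: M2)) /\ A \notin B |: M2.
  apply: matchingU1 => //.
  by rewrite cover_setU1 disjoints_subset setCU subsetI -!disjoints_subset dAB dAM2.
have cM : #|A |: (B |: M2)| = t.
  by rewrite !cardsU1 AM BM2 cM2 addnA subnKC // (leq_trans _ t_ge4).
have [u] := f_local (matching_copy_Mt Mr cM).
rewrite /hverts -/(cover _) !cover_setU1 setUA => /setUP[uAB | uM2] injf.
  have inM e : e \in [set e1; e2] -> e \in A |: (B |: M2).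
    by move/(subsetP sE12M2) => eM2; rewrite !setU1r.
  by case/eqP: e12; apply: injf (agree u uAB); apply: inM; rewrite !inE eqxx ?orbT.
have AB : A = B by apply: injf (collide u (subsetP sM2V u uM2)); rewrite !inE eqxx ?orbT.
by rewrite AB setU11 in AM.
Qed.

Lemma local_coloring_size_bound : 0 < n -> n < 4 * r * (t + 2) * k ^ (2 * r + 1).
Proof.
move=> n_gt0.
have k_gt0 : 0 < k := leq_ltn_trans (leq0n _) (ltn_ord (f (Ordinal n_gt0) set0)).
have K_gt0 : 0 < k ^ (2 * r) by rewrite expn_gt0 k_gt0.
rewrite ltnNge expnD expn1; apply/negP => n_large.
have [|M0 [M0r cM0 _]] := exists_matching (X := [set: 'I_n]) (a := 2 * k) r_gt0.
  by rewrite cardsT card_ord; nia.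
pose O := ~: cover M0.
pose S u := [set p in setX M0 M0 | (p.1 != p.2) && (f u p.1 == f u p.2)].
have [[A B] V_large] : exists p, (k ^ (2 * r) + t) * r < #|[set u in O | p \in S u]|.
  apply: (exists_popular_element (s := k) (Pi := setX M0 M0)) => [u _ | u _ | ].
  - by have := card_monochromatic_pairs M0 (f u); rewrite card_ord cM0 -/(S u); lia.
  - by apply/subsetP=> p; rewrite inE => /andP[].
  have -> : #|O| = n - 2 * k * r.
    by rewrite cardsCs setCK (card_cover_matching M0r) cM0 card_ord.
  rewrite cardsX cM0; set K := k ^ (2 * r) in K_gt0 n_large *.
  have : 4 * k * ((K + t) * r) < n - 2 * k * r.
    have := leq_pmulr (r * t * k) K_gt0; have := leq_pmulr (r * k) K_gt0.
    have : 0 < r * k by rewrite muln_gt0 r_gt0.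
    lia.
  nia.
set V := [set u in O | _] in V_large.
have [u0] : exists u0, u0 \in V by apply/card_gt0P; apply: leq_ltn_trans V_large.
rewrite !inE /= => /and4P[_ /andP[AM0 BM0] AB _].
suff : #|V| < (k ^ (2 * r) + t) * r by rewrite ltnNge (ltnW V_large).
case: M0r => M0r /trivIsetP tiM0.
apply: (card_collision_set_lt (M0r A AM0) (M0r B BM0) (tiM0 A B AM0 BM0 AB)).
  rewrite disjoint_sym disjoints_subset.
  apply: subset_trans (_ : O \subset _); first by apply/subsetP=> u; rewrite inE => /andP[].
  by rewrite setCS subUset !bigcup_sup.
by move=> u; rewrite !inE => /andP[_] /and3P[_ _ /eqP].
Qed.

End LocalColoring.

Lemma INR_expn m e : INR (m ^ e) = pow (INR m) e.
Proof. by elim: e => [|e IHe] //; rewrite expnS -multE mult_INR IHe. Qed.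

Section RealRoots.
Local Open Scope R_scope.

Lemma Rpower_inv_le_mul (x b y : R) (e : nat) : (0 < e)%N ->
  0 < x -> 0 < b -> 0 < y -> x <= b * y ^ e ->
  Rpower x (/ INR e) <= Rpower b (/ INR e) * y.
Proof.
move=> e_gt0 x_gt0 b_gt0 y_gt0 le_x.
have e_neq0 : INR e <> 0 by apply: not_0_INR; lia.
apply: Rle_trans (Rle_Rpower_l _ _ _ _ (conj x_gt0 le_x)) _.
  by apply/Rlt_le/Rinv_0_lt_compat/lt_0_INR/ltP.
rewrite -Rpower_mult_distr //; last exact: pow_lt.
rewrite -Rpower_pow // Rpower_mult Rinv_r // Rpower_1 //.
exact: Rle_refl.
Qed.

Lemma INR_root_lower_bound (n b k e : nat) :
  (0 < e)%N -> (0 < n)%N -> (n <= b * k ^ e)%N ->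
  / Rpower (INR b) (/ INR e) * Rpower (INR n) (/ INR e) <= INR k.
Proof.
move=> e_gt0 n_gt0 le_n.
have /andP[b_gt0 ke_gt0] : ((0 < b) && (0 < k ^ e))%N by rewrite -muln_gt0; lia.
have k_gt0 : (0 < k)%N by move: ke_gt0; rewrite expn_gt0 eqn0Ngt e_gt0 orbF.
have INR_gt0 m : (0 < m)%N -> 0 < INR m by move/ltP; apply: lt_0_INR.
have root_b_gt0 : 0 < Rpower (INR b) (/ INR e) by apply: exp_pos.
apply: (Rmult_le_reg_l (Rpower (INR b) (/ INR e))) => //.
rewrite -Rmult_assoc Rinv_r; last exact: Rgt_not_eq.
rewrite Rmult_1_l; apply: Rpower_inv_le_mul => //; try exact: INR_gt0.
by rewrite -INR_expn -mult_INR; apply/le_INR/leP.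
Qed.

End RealRoots.

Theorem corollary1 (t r : nat) (ht : 4 <= t) (hr : 3 <= r) :
  exists c : R, Rlt 0 c /\
  exists N : nat, forall n : nat, N <= n ->
    forall k : nat, has_local_coloring n r t k ->
      Rle (Rmult c (Rpower (INR n) (Rinv (INR (2 * r + 1))))) (INR k).
Proof.
pose b := 4 * r * (t + 2); pose e := 2 * r + 1.
exists (Rinv (Rpower (INR b) (Rinv (INR e)))); split.
  by apply/Rinv_0_lt_compat/exp_pos.
exists 1 => n n_gt0 k [f f_local].
have n_lt : n < b * k ^ e by apply: local_coloring_size_bound f_local _ => //; lia.
by apply: INR_root_lower_bound (ltnW n_lt); lia.
Qed.
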